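(* Assume the Setting and consider Algorithm 1 (with any $\beta\in(0,\infty]$) using a sequence of noisy data $y^{\delta_k}$ with $\|y^{\delta_k}-y\|\le\delta_k$, $0<\delta_k\to0$, where $\tau>1$ and $\mu_0>0$ satisfy $1-\frac{1+\eta}{\tau}-\eta-\frac{\mu_0}{4\sigma}>0$. Let $n_k:=n_{\delta_k}$ be the stopping index. Then there is a subsequence $(k_l)$ such that $x_{n_{k_l}}^{\delta_{k_l}}\rightharpoonup x^*$ weakly as $l\to\infty$ for some solution $x^*$ of $F(x)=y$ with $x^*\in B_{2\rho}(x_0)$. If in addition $\mathcal R(x)=\frac12\|x\|^2$ and $\mathrm{Ker}(L(x^\dagger))\subset\mathrm{Ker}(L(x))$ for all $x\in B_{2\rho}(x_0)$, then $x_{n_k}^{\delta_k}\rightharpoonup x^\dagger$ as $k\to\infty$, where $x^\dagger$ is the unique solution of $F(x)=y$ minimizing $\|x-x_0\|$.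
   Context: Setting. Let $X,Y$ be real Hilbert spaces. Let $\mathcal R:X\to(-\infty,\infty]$ be proper, lower semicontinuous and strongly convex with constant $\sigma>0$, i.e. $\mathcal R(t\bar x+(1-t)x)+\sigma t(1-t)\|\bar x-x\|^2\le t\mathcal R(\bar x)+(1-t)\mathcal R(x)$ for all $\bar x,x\in\mathrm{dom}(\mathcal R)$ and $t\in[0,1]$. For $\xi\in\partial\mathcal R(x)$ (subdifferential) the Bregman distance is $D_{\mathcal R}^{\xi}(z,x)=\mathcal R(z)-\mathcal R(x)-\langle\xi,z-x\rangle$. The convex conjugate $\mathcal R^*$ is differentiable with $\|\nabla\mathcal R^*(\bar\xi)-\nabla\mathcal R^*(\xi)\|\le\|\bar\xi-\xi\|/(2\sigma)$, and $\nabla\mathcal R^*(\xi)=\arg\min_{x\in X}\{\mathcal R(x)-\langle\xi,x\rangle\}$ (unique minimizer), with $\xi\in\partial\mathcal R(\nabla\mathcal R^*(\xi))$. Let $F:\mathrm{dom}(F)\subset X\to Y$ and $y\in Y$. Assume: (b) there are $\rho>0$, $x_0\in X$, $\xi_0\in\partial\mathcal R(x_0)$ with $B_{2\rho}(x_0):=\{x:\|x-x_0\|\le 2\rho\}\subset\mathrm{dom}(F)$, and $F(x)=y$ has a solution $\bar x$ with $D_{\mathcal R}^{\xi_0}(\bar x,x_0)\le\sigma\rho^2$; (c) $F$ is weakly closed: if $x_n\in\mathrm{dom}(F)$, $x_n\rightharpoonup x$ and $F(x_n)\to v$, then $x\in\mathrm{dom}(F)$ and $F(x)=v$; (d) there are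 bounded linear operators $L(x):X\to Y$, $x\in B_{2\rho}(x_0)$, with $x\mapsto L(x)$ continuous on $B_{2\rho}(x_0)$, a constant $\eta\in[0,1)$ with $\|F(x)-F(\bar x)-L(\bar x)(x-\bar x)\|\le\eta\|F(x)-F(\bar x)\|$ for all $x,\bar x\in B_{2\rho}(x_0)$, and a constant $L>0$ with $\|L(x)\|\le L$ on $B_{2\rho}(x_0)$. Under these assumptions $F(x)=y$ has a unique solution $x^\dagger\in\mathrm{dom}(F)$ minimizing $D_{\mathcal R}^{\xi_0}(x,x_0)$ over all solutions; it satisfies $\|x^\dagger-x_0\|\le\rho$. Algorithm 1 (noisy data $y^\delta$ with $\|y^\delta-y\|\le\delta$, $\delta>0$). Parameters: $\tau>1$, $\beta\in(0,\infty]$, $\mu_0>0$, $\mu_1>0$, and a fixed choice of one of two step-size rules: (constant) $\alpha_n^\delta=\mu_0/L^2$, or (adaptive) $\alpha_n^\delta=\min\{\mu_0\|r_n^\delta\|^2/\|g_n^\delta\|^2,\mu_1\}$ (with $\mu_0\|r_n^\delta\|^2/\|g_n^\delta\|^2:=+\infty$ if $g_n^\delta=0$). Set $\xi_{-1}^\delta=\xi_0^\delta=\xi_0$, $x_0^\delta=x_0=\nabla\mathcal R^*(\xi_0)$. For $n\ge0$: (i) $r_n^\delta:=F(x_n^\delta)-y^\delta$; if $\|r_n^\delta\|\le\tau\delta$, stop and output $x_n^\delta$ (the stopping index is denoted $n_\delta$; it is finite under the hypotheses of the claim). (ii) $g_n^\delta:=L(x_n^\delta)^*r_n^\delta$ and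 $\alpha_n^\delta$ by the chosen rule. (iii) $m_n^\delta:=\xi_n^\delta-\xi_{n-1}^\delta$; $\tilde\gamma_0^\delta:=0$ and for $n\ge1$, $\tilde\gamma_n^\delta:=\langle m_n^\delta,x_n^\delta-x_{n-1}^\delta\rangle-(1-\eta)\alpha_{n-1}^\delta\|r_{n-1}^\delta\|^2+(1+\eta)\alpha_{n-1}^\delta\delta\|r_{n-1}^\delta\|+\beta_{n-1}^\delta\tilde\gamma_{n-1}^\delta$. (iv) $\beta_n^\delta:=\min\{\max\{0,(\alpha_n^\delta\langle g_n^\delta,m_n^\delta\rangle-2\sigma\tilde\gamma_n^\delta)/\|m_n^\delta\|^2\},\beta\}$ if $m_n^\delta\ne0$, and $\beta_n^\delta:=0$ if $m_n^\delta=0$. (v) $\xi_{n+1}^\delta:=\xi_n^\delta-\alpha_n^\delta g_n^\delta+\beta_n^\delta m_n^\delta$, $x_{n+1}^\delta:=\nabla\mathcal R^*(\xi_{n+1}^\delta)$. *)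

From HB Require Import structures.
From mathcomp Require Import all_boot all_order all_algebra.
From mathcomp Require Import reals.
Set Implicit Arguments. Unset Strict Implicit. Unset Printing Implicit Defensive.
Import Order.TTheory GRing.Theory Num.Theory.
Local Open Scope ring_scope.

Definition seq_cvg (R : realType) (u : nat -> R) (l : R) : Prop :=
  forall eps : R, 0 < eps -> exists N : nat, forall n : nat, (N <= n)%N -> `|u n - l| < eps.

Definition hnorm (R : realType) (X : lmodType R) (ip : X -> X -> R) (x : X) : R :=
  Num.sqrt (ip x x).

Definition is_inner_product (R : realType) (X : lmodType R) (ip : X -> X -> R) : Prop :=
  (forall x y, ip x y = ip y x) /\
  (forall (a : R) (x y z : X), ip (a *: x + y) z = a * ip x z + ip y z) /\
  (forall x, 0 <= ip x x) /\
  (forall x, ip x x = 0 -> x = 0).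

Definition strong_cvg (R : realType) (X : lmodType R) (ip : X -> X -> R)
  (u : nat -> X) (l : X) : Prop :=
  seq_cvg (fun n => hnorm ip (u n - l)) 0.

Definition weak_cvg (R : realType) (X : lmodType R) (ip : X -> X -> R)
  (u : nat -> X) (l : X) : Prop :=
  forall z : X, seq_cvg (fun n => ip (u n) z) (ip l z).

Definition cauchy_seq (R : realType) (X : lmodType R) (ip : X -> X -> R)
  (u : nat -> X) : Prop :=
  forall eps : R, 0 < eps -> exists N : nat, forall m n : nat,
    (N <= m)%N -> (N <= n)%N -> hnorm ip (u m - u n) < eps.

Definition is_hilbert (R : realType) (X : lmodType R) (ip : X -> X -> R) : Prop :=
  is_inner_product ip /\
  (forall u : nat -> X, cauchy_seq ip u -> exists l, strong_cvg ip u l).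

(* An extended-valued functional R : X -> (-oo, +oo] is represented by its
   effective domain dom and its (real) values f on dom; off dom it is +oo. *)
Definition proper_fun (R : realType) (X : lmodType R) (dom : X -> Prop) : Prop :=
  exists x, dom x.

Definition lsc_fun (R : realType) (X : lmodType R) (ip : X -> X -> R)
  (dom : X -> Prop) (f : X -> R) : Prop :=
  forall (c : R) (u : nat -> X) (x : X),
    (forall n, dom (u n) /\ f (u n) <= c) -> strong_cvg ip u x -> dom x /\ f x <= c.

Definition strongly_convex (R : realType) (X : lmodType R) (ip : X -> X -> R)
  (dom : X -> Prop) (f : X -> R) (sigma : R) : Prop :=
  forall (xb x : X) (t : R), dom xb -> dom x -> 0 <= t <= 1 ->
    dom (t *: xb + (1 - t) *: x) /\
    f (t *: xb + (1 - t) *: x) + sigma * t * (1 - t) * hnorm ip (xb - x) ^+ 2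
      <= t * f xb + (1 - t) * f x.

Definition subdiff (R : realType) (X : lmodType R) (ip : X -> X -> R)
  (dom : X -> Prop) (f : X -> R) (xi x : X) : Prop :=
  dom x /\ forall z, dom z -> f x + ip xi (z - x) <= f z.

Definition bregman (R : realType) (X : lmodType R) (ip : X -> X -> R)
  (f : X -> R) (xi z x : X) : R :=
  f z - f x - ip xi (z - x).

(* gradRs xi is the minimizer of R(x) - <xi, x>, i.e. gradRs = grad R^* *)
Definition is_grad_conj (R : realType) (X : lmodType R) (ip : X -> X -> R)
  (dom : X -> Prop) (f : X -> R) (gradRs : X -> X) : Prop :=
  forall xi : X, dom (gradRs xi) /\
    forall z, dom z -> f (gradRs xi) - ip xi (gradRs xi) <= f z - ip xi z.

Definition weakly_closed (R : realType) (X Y : lmodType R)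
  (ipX : X -> X -> R) (ipY : Y -> Y -> R) (domF : X -> Prop) (F : X -> Y) : Prop :=
  forall (u : nat -> X) (x : X) (v : Y),
    (forall n, domF (u n)) -> weak_cvg ipX u x ->
    strong_cvg ipY (fun n => F (u n)) v -> domF x /\ F x = v.

Inductive step_rule := ConstantStep | AdaptiveStep.

(* state at iteration n:
   (xi_n, xi_{n-1}, x_n, x_{n-1}, alpha_{n-1}, ||r_{n-1}||, beta_{n-1}, gamma~_{n-1}) *)
Record alg_state (R : realType) (X : lmodType R) := AlgState {
  st_xi : X; st_xip : X; st_x : X; st_xp : X;
  st_ap : R; st_rp : R; st_bp : R; st_gp : R }.

(* min{v, beta} with beta in (0, +oo]; None stands for beta = +oo *)
Definition cap_beta (R : realType) (beta : option R) (v : R) : R :=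
  match beta with Some b => Order.min v b | None => v end.

Definition alg_step (R : realType) (X Y : lmodType R)
  (ipX : X -> X -> R) (ipY : Y -> Y -> R) (F : X -> Y) (Lstar : X -> Y -> X)
  (gradRs : X -> X) (sigma eta Lc mu0 mu1 : R) (rule : step_rule)
  (beta : option R) (delta : R) (yd : Y) (n : nat) (s : alg_state X)
  : alg_state X :=
  let r := F (st_x s) - yd in
  let g := Lstar (st_x s) r in
  let alpha := match rule with
               | ConstantStep => mu0 / Lc ^+ 2
               | AdaptiveStep =>
                   if g == 0 then mu1
                   else Order.min (mu0 * hnorm ipY r ^+ 2 / hnorm ipX g ^+ 2) mu1
               end in
  let m := st_xi s - st_xip s in
  let gam := match n with
             | 0%N => 0
             | _.+1 => ipX m (st_x s - st_xp s)
                       - (1 - eta) * st_ap s * st_rp s ^+ 2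
                       + (1 + eta) * st_ap s * delta * st_rp s
                       + st_bp s * st_gp s
             end in
  let bet := if m == 0 then 0
             else cap_beta beta
                    (Order.max 0 ((alpha * ipX g m - 2 * sigma * gam) / hnorm ipX m ^+ 2)) in
  let xi' := st_xi s - alpha *: g + bet *: m in
  @AlgState R X xi' (st_xi s) (gradRs xi') (st_x s) alpha (hnorm ipY r) bet gam.

(* state at iteration n (the iteration is run without stopping; the stopping
   rule is applied separately through [is_stop_index]) *)
Fixpoint alg_state_at (R : realType) (X Y : lmodType R)
  (ipX : X -> X -> R) (ipY : Y -> Y -> R) (F : X -> Y) (Lstar : X -> Y -> X)
  (gradRs : X -> X) (sigma eta Lc mu0 mu1 : R) (rule : step_rule)
  (beta : option R) (xi0 x0 : X) (delta : R) (yd : Y) (n : nat) : alg_state X :=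
  match n with
  | 0%N => @AlgState R X xi0 xi0 x0 x0 0 0 0 0
  | n'.+1 => alg_step ipX ipY F Lstar gradRs sigma eta Lc mu0 mu1 rule beta delta yd n'
               (alg_state_at ipX ipY F Lstar gradRs sigma eta Lc mu0 mu1 rule beta xi0 x0 delta yd n')
  end.

Definition alg_x (R : realType) (X Y : lmodType R)
  (ipX : X -> X -> R) (ipY : Y -> Y -> R) (F : X -> Y) (Lstar : X -> Y -> X)
  (gradRs : X -> X) (sigma eta Lc mu0 mu1 : R) (rule : step_rule)
  (beta : option R) (xi0 x0 : X) (delta : R) (yd : Y) (n : nat) : X :=
  st_x (alg_state_at ipX ipY F Lstar gradRs sigma eta Lc mu0 mu1 rule beta xi0 x0 delta yd n).

Definition is_stop_index (R : realType) (X Y : lmodType R)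
  (ipX : X -> X -> R) (ipY : Y -> Y -> R) (F : X -> Y) (Lstar : X -> Y -> X)
  (gradRs : X -> X) (sigma eta Lc mu0 mu1 : R) (rule : step_rule)
  (beta : option R) (xi0 x0 : X) (tau delta : R) (yd : Y) (n : nat) : Prop :=
  let xs := alg_x ipX ipY F Lstar gradRs sigma eta Lc mu0 mu1 rule beta xi0 x0 delta yd in
  hnorm ipY (F (xs n) - yd) <= tau * delta /\
  forall m : nat, (m < n)%N -> tau * delta < hnorm ipY (F (xs m) - yd).

From HB Require Import structures.
From mathcomp Require Import all_boot all_order all_algebra.
From mathcomp Require Import classical_sets reals.
From mathcomp Require Import ring lra.
From Stdlib Require Import ClassicalEpsilon Classical.
Import Order.TTheory GRing.Theory Num.Theory.
Set Implicit Arguments. Unset Strict Implicit. Unset Printing Implicit Defensive.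
Local Open Scope ring_scope.

(* Before the discrepancy principle fires, every step of Algorithm 1 decreases
   the Bregman distance D^{xi_n}(xb, x_n) to a fixed solution xb by a fixed
   multiple of delta^2: the step R(x_n) - R(x_{n+1}) - <xi_{n+1}, x_n - x_{n+1}>
   is paid for by strong convexity, the inner product <xi_{n+1} - xi_n, x_n - xb>
   by the tangential cone condition, and beta_n is chosen so that the momentum
   term costs no more than the gradient step.  Hence the stopping index is
   finite, all iterates stay in B_{2 rho}(x0), and the stopped iterates have
   weakly convergent subsequences (a diagonal argument plus the Riesz
   representation theorem); since ||F(x_{n_k}) - y|| <= (tau + 1) delta_k and F
   is weakly closed, their limits solve F(x) = y.  For R = ||.||^2 / 2 every
   iterate satisfies x_n - x0 _|_ Ker L(x^dagger), because x_n - x0 is a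
   combination of the L(x_m)^* r_m and Ker L(x^dagger) is contained in every
   Ker L(x_m); minimality gives the same for x^dagger - x0, while a weak limit
   differs from x^dagger by an element of that kernel.  So every weak cluster
   point is x^dagger and the whole sequence converges weakly. *)

Lemma quadratic_ge0_discr (R : realType) (a b c : R) : 0 <= c ->
  (forall t, 0 <= a + 2 * b * t + c * t ^+ 2) -> b ^+ 2 <= a * c.
Proof.
move=> c0 H.
have a0 : 0 <= a by have := H 0; rewrite !mulr0 expr0n /= mulr0 !addr0.
have [ce|cpos] := eqVneq c 0; first rewrite ce in H *.
  have [b0|bn0] := eqVneq b 0; first by rewrite b0 expr0n /= mulr0.
  have := H (- (a + 1) / (2 * b)).
  have -> : a + 2 * b * (- (a + 1) / (2 * b)) + 0 * (- (a + 1) / (2 * b)) ^+ 2 = -1.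
    by field; rewrite bn0.
  by rewrite lerNr oppr0 ler10.
have cp : 0 < c by rewrite lt_def cpos c0.
have := H (- b / c).
have -> : a + 2 * b * (- b / c) + c * (- b / c) ^+ 2 = a - b ^+ 2 / c.
  by field; rewrite cpos.
by rewrite subr_ge0 ler_pdivrMr.
Qed.

Lemma ler_sqr_nneg (R : realType) (a b : R) : 0 <= b -> a ^+ 2 <= b ^+ 2 -> a <= b.
Proof.
move=> b0 h; apply: le_trans (ler_norm a) _.
by rewrite -(ler_pXn2r (_ : (0 < 2)%N)) ?nnegrE ?normr_ge0 // real_normK ?num_real.
Qed.

Lemma ltr_norm_sqr (R : realType) (a e : R) : 0 < e -> a ^+ 2 < e ^+ 2 -> `|a| < e.
Proof.
move=> e0 h.
by rewrite -(ltr_pXn2r (_ : (0 < 2)%N)) ?nnegrE ?normr_ge0 ?ltW // real_normK ?num_real.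
Qed.

Lemma ex_invS_lt (R : realType) (a : R) : 0 < a ->
  exists K : nat, forall j, (K <= j)%N -> j.+1%:R^-1 < a.
Proof.
move=> a0; have [K HK] := ltr_add_invr a0; rewrite add0r in HK.
exists K => j Kj; apply: le_lt_trans HK.
by rewrite lef_pV2 ?posrE ?ltr0Sn // ler_nat.
Qed.

Lemma ex_inf_approx (R : realType) (T : Type) (P : T -> Prop) (Phi : T -> R) (m : R) :
  (exists w, P w) -> (forall w, P w -> m <= Phi w) ->
  exists D, (forall w, P w -> D <= Phi w) /\
    forall e, 0 < e -> exists w, P w /\ Phi w < D + e.
Proof.
move=> [w0 Pw0] Hm.
pose E := fun r : R => exists w, P w /\ r = Phi w.
have hE : has_inf E.
  split; first by exists (Phi w0); exists w0.
  by exists m => r [w [Pw ->]]; apply: Hm.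
exists (inf E); split; first by move=> w Pw; apply: ge_inf hE.2 _ _; exists w.
by move=> e e0; have [r [w [Pw ->]] h] := inf_adherent e0 hE; exists w.
Qed.

Section InnerProduct.
Variables (R : realType) (X : lmodType R) (ip : X -> X -> R).
Hypothesis Hip : is_inner_product ip.

Lemma ipC x y : ip x y = ip y x.
Proof. by have [] := Hip. Qed.

Lemma ipDZl a x y z : ip (a *: x + y) z = a * ip x z + ip y z.
Proof. by have [_ []] := Hip. Qed.

Lemma ip_ge0 x : 0 <= ip x x.
Proof. by have [_ [_ []]] := Hip. Qed.

Lemma ip_eq0 x : ip x x = 0 -> x = 0.
Proof. by have [_ [_ [_ /(_ x)]]] := Hip. Qed.

Lemma ip0l z : ip 0 z = 0.
Proof. by have := ipDZl 1 0 0 z; rewrite scaler0 addr0 mul1r; lra. Qed.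

Lemma ipDl x y z : ip (x + y) z = ip x z + ip y z.
Proof. by rewrite -[x]scale1r ipDZl mul1r scale1r. Qed.

Lemma ipZl a x z : ip (a *: x) z = a * ip x z.
Proof. by rewrite -[a *: x]addr0 ipDZl ip0l addr0. Qed.

Lemma ipNl x z : ip (- x) z = - ip x z.
Proof. by rewrite -scaleN1r ipZl mulN1r. Qed.

Lemma ipBl x y z : ip (x - y) z = ip x z - ip y z.
Proof. by rewrite ipDl ipNl. Qed.

Lemma ip0r z : ip z 0 = 0.
Proof. by rewrite ipC ip0l. Qed.

Lemma ipDr x y z : ip z (x + y) = ip z x + ip z y.
Proof. by rewrite !(ipC z) ipDl. Qed.

Lemma ipZr a x z : ip z (a *: x) = a * ip z x.
Proof. by rewrite !(ipC z) ipZl. Qed.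

Lemma ipNr x z : ip z (- x) = - ip z x.
Proof. by rewrite !(ipC z) ipNl. Qed.

Lemma ipBr x y z : ip z (x - y) = ip z x - ip z y.
Proof. by rewrite ipDr ipNr. Qed.

Lemma ip_sqrD x y : ip (x + y) (x + y) = ip x x + 2 * ip x y + ip y y.
Proof. by rewrite !ipDl !ipDr (ipC y x); ring. Qed.

Lemma ip_sqrB x y : ip (x - y) (x - y) = ip x x - 2 * ip x y + ip y y.
Proof. by rewrite ip_sqrD ipNr ipNl ipNr opprK; ring. Qed.

Lemma sqr_ip_le x y : ip x y ^+ 2 <= ip x x * ip y y.
Proof.
apply: quadratic_ge0_discr; first exact: ip_ge0.
by move=> t; have := ip_ge0 (x + t *: y); rewrite ip_sqrD ipZr ipZl ipZr; lra.
Qed.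

Lemma hnorm_ge0 x : 0 <= hnorm ip x.
Proof. exact: sqrtr_ge0. Qed.

Lemma hnorm_sqr x : hnorm ip x ^+ 2 = ip x x.
Proof. by rewrite /hnorm sqr_sqrtr // ip_ge0. Qed.

Lemma hnorm_eq0 x : hnorm ip x = 0 -> x = 0.
Proof. by move=> h; apply: ip_eq0; rewrite -hnorm_sqr h expr0n. Qed.

Lemma hnorm0 : hnorm ip 0 = 0.
Proof. by rewrite /hnorm ip0l sqrtr0. Qed.

Lemma norm_ip_le x y : `|ip x y| <= hnorm ip x * hnorm ip y.
Proof.
rewrite /hnorm -sqrtrM ?ip_ge0 // -sqrtr_sqr.
by rewrite ler_sqrt ?mulr_ge0 ?ip_ge0 // sqr_ip_le.
Qed.

Lemma ip_le x y : ip x y <= hnorm ip x * hnorm ip y.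
Proof. exact: le_trans (ler_norm _) (norm_ip_le x y). Qed.

Lemma hnorm_le x c : 0 <= c -> ip x x <= c ^+ 2 -> hnorm ip x <= c.
Proof. by move=> c0 h; apply: ler_sqr_nneg => //; rewrite hnorm_sqr. Qed.

Lemma ler_hnormD x y : hnorm ip (x + y) <= hnorm ip x + hnorm ip y.
Proof.
apply: hnorm_le; first by rewrite addr_ge0 ?hnorm_ge0.
by rewrite ip_sqrD sqrrD !hnorm_sqr; have := ip_le x y; lra.
Qed.

Lemma hnormZ a x : hnorm ip (a *: x) = `|a| * hnorm ip x.
Proof.
by rewrite /hnorm ipZl ipZr mulrA -expr2 sqrtrM ?sqr_ge0 // sqrtr_sqr.
Qed.

Lemma hnorm_opp x : hnorm ip (- x) = hnorm ip x.
Proof. by rewrite -scaleN1r hnormZ normrN normr1 mul1r. Qed.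

Lemma hnorm_distC x y : hnorm ip (x - y) = hnorm ip (y - x).
Proof. by rewrite -hnorm_opp opprB. Qed.

Lemma hnorm_distD x y z : hnorm ip (x - z) <= hnorm ip (x - y) + hnorm ip (y - z).
Proof. by rewrite (_ : x - z = (x - y) + (y - z)) ?ler_hnormD // addrA subrK. Qed.

End InnerProduct.

Definition increasing (s : nat -> nat) : Prop := forall k, (s k < s k.+1)%N.

Lemma ex_increasing_subseq (P : nat -> nat -> Prop) :
  (forall k N, exists n, (N <= n)%N /\ P k n) ->
  exists s, increasing s /\ forall k, P k (s k).
Proof.
move=> H.
have h k N : {n | (N <= n)%N /\ P k n}.
  exact: constructive_indefinite_description.
pose s := fix s k := match k with
  | 0%N => proj1_sig (h 0%N 0%N)
  | k'.+1 => proj1_sig (h k'.+1 (s k').+1) end.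
exists s; split; first by move=> k /=; case: (h k.+1 (s k).+1) => n [].
by case=> [|k] /=; [case: (h 0%N 0%N) => n [] | case: (h k.+1 _) => n []].
Qed.

Lemma increasing_ge s : increasing s -> forall k, (k <= s k)%N.
Proof. by move=> H; elim=> [//|k IH]; apply: leq_ltn_trans IH (H k). Qed.

Lemma increasing_lt s : increasing s -> forall m n, (m < n)%N -> (s m < s n)%N.
Proof.
move=> H m; elim=> [//|n IH]; rewrite ltnS leq_eqVlt => /orP[/eqP->|/IH h].
  exact: H.
exact: ltn_trans h (H n).
Qed.

Lemma increasing_comp s t : increasing s -> increasing t -> increasing (s \o t).
Proof. by move=> Hs Ht k; apply: increasing_lt Hs _ _ (Ht k). Qed.

Section RealSequences.
Variable R : realType.
Implicit Types (u v : nat -> R) (a b c l : R).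

Lemma seq_cvg_unique u a b : seq_cvg u a -> seq_cvg u b -> a = b.
Proof.
move=> Ha Hb; apply/eqP; rewrite -subr_eq0; apply/eqP.
apply/normr0_eq0/eqP; rewrite eq_le normr_ge0 andbT.
apply/ler_addgt0Pr => e e0; rewrite add0r.
have e2 : 0 < e / 2 by rewrite divr_gt0.
have [N1 H1] := Ha _ e2; have [N2 H2] := Hb _ e2.
have := H1 (maxn N1 N2) (leq_maxl _ _); have := H2 (maxn N1 N2) (leq_maxr _ _).
move: (u _) => w h2 h1.
have : `|a - b| <= `|a - w| + `|w - b|.
  by rewrite (_ : a - b = (a - w) + (w - b)) ?ler_normD // addrA subrK.
by rewrite (distrC a w); lra.
Qed.

Lemma seq_cvg_ext u v l : (forall n, u n = v n) -> seq_cvg u l -> seq_cvg v l.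
Proof. by move=> h H e e0; have [N HN] := H e e0; exists N => n /HN; rewrite h. Qed.

Lemma seq_cvg_subseq u l (s : nat -> nat) :
  (forall n, (n <= s n)%N) -> seq_cvg u l -> seq_cvg (u \o s) l.
Proof.
move=> hs H e e0; have [N HN] := H e e0; exists N => n Nn.
by apply: HN; apply: leq_trans Nn (hs n).
Qed.

Lemma seq_cvg_cst c : seq_cvg (fun _ => c) c.
Proof. by move=> e e0; exists 0%N => n _; rewrite subrr normr0. Qed.

Lemma seq_cvgD u v a b :
  seq_cvg u a -> seq_cvg v b -> seq_cvg (fun n => u n + v n) (a + b).
Proof.
move=> Ha Hb e e0.
have e2 : 0 < e / 2 by rewrite divr_gt0.
have [N1 H1] := Ha _ e2; have [N2 H2] := Hb _ e2.
exists (maxn N1 N2) => n; rewrite geq_max => /andP[n1 n2].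
have := H1 _ n1; have := H2 _ n2; have := ler_normD (u n - a) (v n - b).
by rewrite addrACA -opprD; lra.
Qed.

Lemma seq_cvgMl u a c : seq_cvg u a -> seq_cvg (fun n => c * u n) (c * a).
Proof.
move=> Ha e e0.
have c1 : 0 < `|c| + 1 by rewrite ltr_wpDl.
have [N H] := Ha _ (divr_gt0 e0 c1); exists N => n /H h.
rewrite -mulrBr normrM.
apply: (@le_lt_trans _ _ (`|c| * (e / (`|c| + 1)))).
  by apply: ler_wpM2l => //; apply: ltW.
by rewrite mulrA ltr_pdivrMr // mulrDr mulr1; have := normr_ge0 c; nra.
Qed.

Lemma seq_cvgB u v a b :
  seq_cvg u a -> seq_cvg v b -> seq_cvg (fun n => u n - v n) (a - b).
Proof.
move=> Ha Hb; have := seq_cvgD Ha (seq_cvgMl (-1) Hb).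
by rewrite mulN1r; apply: seq_cvg_ext => n; rewrite mulN1r.
Qed.

Lemma seq_cvg_le u l c : (forall n, u n <= c) -> seq_cvg u l -> l <= c.
Proof.
move=> h H; rewrite leNgt; apply/negP => cl.
have lc : 0 < l - c by rewrite subr_gt0.
have [N HN] := H _ lc.
have := HN N (leqnn N); have := h N; have := ler_norm (l - u N).
by rewrite distrC; lra.
Qed.

Lemma seq_cvg_squeeze u v l :
  (forall n, `|u n - l| <= v n) -> seq_cvg v 0 -> seq_cvg u l.
Proof.
move=> h H e e0; have [N HN] := H e e0; exists N => n /HN.
by rewrite subr0 => h2; apply: le_lt_trans (h n) (le_lt_trans (ler_norm _) h2).
Qed.

Lemma not_seq_cvg u l : ~ seq_cvg u l ->
  exists2 e, 0 < e & forall N, exists n, (N <= n)%N /\ ~ `|u n - l| < e.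
Proof.
move=> hnc; apply: NNPP => hh; apply: hnc => e e0; apply: NNPP => hN; apply: hh.
exists e => // N; apply: NNPP => hn; apply: hN; exists N => n Nn.
by apply: NNPP => hlt; apply: hn; exists n.
Qed.

Lemma cluster_point_subseq u c :
  (forall e, 0 < e -> forall N, exists n, (N <= n)%N /\ `|u n - c| < e) ->
  exists2 s, increasing s & seq_cvg (u \o s) c.
Proof.
move=> H.
have hk k : 0 < k.+1%:R^-1 :> R by rewrite invr_gt0 ltr0Sn.
have [s [Hs Hp]] := @ex_increasing_subseq (fun k n => `|u n - c| < k.+1%:R^-1)
  (fun k => H _ (hk k)).
exists s => // e e0; have [K HK] := ex_invS_lt e0.
by exists K => k /HK; apply: lt_trans (Hp k).
Qed.

Lemma bolzano_weierstrass u M : (forall n, `|u n| <= M) ->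
  exists2 s, increasing s & exists c, seq_cvg (u \o s) c.
Proof.
move=> hM.
pose S N := fun x : R => exists n, (N <= n)%N /\ x = u n.
pose sN N := sup (S N).
have hS N : has_sup (S N).
  split; first by exists (u N); exists N.
  by exists M => x [n [_ ->]]; apply: le_trans (ler_norm _) (hM n).
have sNge N n : (N <= n)%N -> u n <= sN N.
  by move=> Nn; apply: sup_upper_bound (hS N) _ _; exists n.
have sNmono N N' : (N <= N')%N -> sN N' <= sN N.
  move=> NN; apply: ge_sup; first by exists (u N'); exists N'.
  by move=> x [n [Nn ->]]; apply: sNge; apply: leq_trans NN Nn.
pose T := fun x : R => exists N, x = sN N.
have hT : has_inf T.
  split; first by exists (sN 0%N); exists 0%N.
  exists (- M) => x [N ->]; apply: le_trans (sNge N N (leqnn N)).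
  by have := hM N; rewrite ler_norml => /andP[].
(* the limit superior inf_N sup_{n >= N} u n is a cluster point *)
pose c := inf T.
have cle N : c <= sN N by apply: ge_inf hT.2 _ _; exists N.
suff clus : forall e, 0 < e -> forall N, exists n, (N <= n)%N /\ `|u n - c| < e.
  by have [s Hs Hc] := cluster_point_subseq clus; exists s => //; exists c.
move=> e e0 N.
have [x [N2 ->] hx] := inf_adherent e0 hT.
have [x' [n [Nn ->]] hx'] := sup_adherent e0 (hS (maxn N N2)).
exists n; split; first by apply: leq_trans Nn; apply: leq_maxl.
have h1 := sNmono _ _ (leq_maxr N N2); have h2 := sNge _ _ Nn.
have h3 := cle (maxn N N2).
by rewrite ltr_norml; apply/andP; split; rewrite /sN in h1 h2 h3 hx hx' *; lra.
Qed.

Lemma bounded_cauchy_cvg u M : (forall n, `|u n| <= M) ->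
  (forall e, 0 < e -> exists N, forall m n, (N <= m)%N -> (N <= n)%N -> `|u m - u n| < e) ->
  exists c, seq_cvg u c.
Proof.
move=> hM hC; have [s Hs [c Hc]] := bolzano_weierstrass hM.
exists c => e e0; have e2 : 0 < e / 2 by rewrite divr_gt0.
have [N HN] := hC _ e2; have [K HK] := Hc _ e2.
exists N => n Nn.
have h1 := HK (maxn N K) (leq_maxr _ _).
have h2 := HN n (s (maxn N K)) Nn (leq_trans (leq_maxl N K) (increasing_ge Hs _)).
have := ler_normD (u n - u (s (maxn N K))) (u (s (maxn N K)) - c).
by rewrite addrA subrK /=; rewrite /= in h1; lra.
Qed.

End RealSequences.

Lemma diagonal_subseq (R : realType) (b : nat -> nat -> R) M :
  (forall j n, `|b j n| <= M) ->
  exists2 psi, increasing psi & forall j, exists c, seq_cvg (fun n => b j (psi n)) c.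
Proof.
move=> hM.
have h (j : nat) (f : nat -> nat) :
    {s | increasing s /\ exists c, seq_cvg (fun k => b j (f (s k))) c}.
  apply: constructive_indefinite_description.
  by have [s Hs Hc] := @bolzano_weierstrass _ (fun n => b j (f n)) M (fun n => hM j _); exists s.
pose g j f := proj1_sig (h j f).
have gi j f : increasing (g j f) by case: (proj2_sig (h j f)).
have gc j f : exists c, seq_cvg (fun k => b j (f (g j f k))) c by case: (proj2_sig (h j f)).
(* phi j.+1 is a subsequence of phi j along which b j converges *)
pose phi := fix phi j := match j with
  | 0%N => fun n : nat => n
  | j'.+1 => fun n => phi j' (g j' (phi j') n) end.
have phi_S j n : phi j.+1 n = phi j (g j (phi j) n) by [].
have phi_i j : increasing (phi j).
  elim: j => [|j IH] k //; rewrite !phi_S; apply: increasing_lt => //.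
  exact: gi.
have phi_tail j d i : exists k, (i <= k)%N /\ phi (d + j)%N i = phi j k.
  elim: d i => [|d IH] i; first by exists i.
  rewrite addSn phi_S; have [k [ik ->]] := IH (g (d + j)%N (phi (d + j)%N) i).
  by exists k; split => //; apply: leq_trans (increasing_ge (gi _ _) _) ik.
exists (fun n => phi n.+1 n).
  move=> n; rewrite (phi_S n.+1); apply: increasing_lt => //.
  exact: leq_trans (increasing_ge (gi _ _) _).
move=> j; have [c Hc] := gc j (phi j); exists c => e e0.
have [N HN] := Hc e e0; exists (maxn N j.+1) => n; rewrite geq_max => /andP[Nn jn].
have [k [nk hk]] := phi_tail j.+1 (n - j)%N n.
rewrite (_ : ((n - j) + j.+1 = n.+1)%N) in hk; last by rewrite addnS subnK // ltnW.
by rewrite !phi_S in hk; rewrite /= hk; apply: HN; apply: leq_trans Nn nk.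
Qed.

Inductive inspan (R : realType) (X : lmodType R) (u : nat -> X) : X -> Prop :=
  | inspan0 : inspan u 0
  | inspan_cons j (a : R) w : inspan u w -> inspan u (a *: u j + w).

Lemma inspanD (R : realType) (X : lmodType R) (u : nat -> X) w1 w2 :
  inspan u w1 -> inspan u w2 -> inspan u (w1 + w2).
Proof.
elim=> [|j a w _ IH] h2; first by rewrite add0r.
by rewrite -addrA; apply: inspan_cons; apply: IH.
Qed.

Lemma inspanZ (R : realType) (X : lmodType R) (u : nat -> X) (c : R) w :
  inspan u w -> inspan u (c *: w).
Proof.
elim=> [|j a w' _ IH]; first by rewrite scaler0; apply: inspan0.
by rewrite scalerDr scalerA; apply: inspan_cons.
Qed.

Lemma inspan_gen (R : realType) (X : lmodType R) (u : nat -> X) j : inspan u (u j).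
Proof. by rewrite -[u j]addr0 -[u j]scale1r; apply: inspan_cons; apply: inspan0. Qed.

Section NearMinimisers.
Variables (R : realType) (X : lmodType R) (ip : X -> X -> R).
Hypothesis Hip : is_inner_product ip.

(* The quadratic t |-> Phi (w + t w') stays above inf Phi, so its discriminant is small. *)
Lemma near_min_orth (S : X -> Prop) (f : X -> R) D e w :
  (forall w w' t, S w -> S w' -> S (w + t *: w')) ->
  (forall x y, f (x + y) = f x + f y) -> (forall a x, f (a *: x) = a * f x) ->
  (forall w, S w -> D <= ip w w - 2 * f w) ->
  S w -> ip w w - 2 * f w < D + e ->
  forall w', S w' -> (ip w w' - f w') ^+ 2 <= e * ip w' w'.
Proof.
move=> SD fD fZ HD Sw Hw w' Sw'; apply: quadratic_ge0_discr; first exact: ip_ge0.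
move=> t; have := HD _ (SD w w' t Sw Sw').
by rewrite fD fZ ip_sqrD // !ipZr // ipZl //; lra.
Qed.

(* Parallelogram law, with the midpoint of w1 and w2 as competitor. *)
Lemma near_min_close (f : X -> R) D w1 w2 e1 e2 :
  (forall x y, f (x + y) = f x + f y) -> (forall a x, f (a *: x) = a * f x) ->
  (forall w, D <= ip w w - 2 * f w) ->
  ip w1 w1 - 2 * f w1 < D + e1 -> ip w2 w2 - 2 * f w2 < D + e2 ->
  ip (w1 - w2) (w1 - w2) < 2 * e1 + 2 * e2.
Proof.
move=> fD fZ HD h1 h2; have := HD (2^-1 *: (w1 + w2)).
by rewrite fZ fD ipZl // ipZr // ip_sqrD // ip_sqrB //; lra.
Qed.

Lemma ip_cvg_of_span (u v : nat -> X) M :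
  (forall n, inspan u (v n)) -> (forall n, hnorm ip (v n) <= M) ->
  (forall j, exists c, seq_cvg (fun n => ip (v n) (u j)) c) ->
  forall z, exists c, seq_cvg (fun n => ip (v n) z) c.
Proof.
move=> vs vM vc z.
have M0 : 0 <= M by apply: le_trans (vM 0%N); apply: hnorm_ge0.
have spc w : inspan u w -> exists c, seq_cvg (fun n => ip (v n) w) c.
  elim=> [|j a w0 _ [c IH]].
    by exists 0; apply: seq_cvg_ext (seq_cvg_cst 0) => n; rewrite ip0r.
  have [cj Hj] := vc j; exists (a * cj + c).
  by apply: seq_cvg_ext (seq_cvgD (seq_cvgMl a Hj) IH) => n; rewrite ipDr // ipZr.
have lb w : - ip z z <= ip w w - 2 * ip z w.
  by have := ip_ge0 Hip (z - w); rewrite ip_sqrB //; lra.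
have [D [HD1 HD2]] := @ex_inf_approx _ _ (inspan u) (fun w => ip w w - 2 * ip z w) (- ip z z)
  (ex_intro _ 0 (inspan0 u)) (fun w _ => lb w).
have SD w w' t : inspan u w -> inspan u w' -> inspan u (w + t *: w').
  by move=> Sw Sw'; apply: inspanD Sw (inspanZ t Sw').
apply: (@bounded_cauchy_cvg _ _ (M * hnorm ip z)).
  by move=> n; apply: le_trans (norm_ip_le Hip _ _) _; apply: ler_wpM2r; rewrite ?hnorm_ge0.
move=> e e0.
have e3 : 0 < e / 3 by rewrite divr_gt0.
have K0 : 0 < M ^+ 2 + 1 by rewrite ltr_wpDl ?sqr_ge0.
have [w [Sw Hw]] := HD2 _ (divr_gt0 (exprn_gt0 2 e3) K0).
have near := near_min_orth SD (fun x y => ipDr Hip x y z) (fun a x => ipZr Hip a x z)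
  HD1 Sw Hw.
have small n : `|ip (v n) (z - w)| < e / 3.
  apply: ltr_norm_sqr => //; rewrite ipBr // !(ipC Hip (v n)) -sqrrN opprB.
  apply: le_lt_trans (near _ (vs n)) _.
  have := hnorm_ge0 ip (v n); have := vM n; rewrite -hnorm_sqr //.
  move: (hnorm ip (v n)) => q q0 qM; have qM2 : q * q <= M * M by apply: ler_pM.
  rewrite mulrAC ltr_pdivrMr //; have := exprn_gt0 2 e3; move: ((e / 3) ^+ 2) => E E0.
  nra.
have [cw Hcw] := spc w Sw; have [N HN] := Hcw _ (divr_gt0 e3 (ltr0Sn _ 1)).
exists N => m n Nm Nn.
have h1 := small m; have h2 := small n; have h3 := HN _ Nm; have h4 := HN _ Nn.
rewrite !ipBr // in h1 h2.
move: (ip (v m) z) (ip (v n) z) (ip (v m) w) (ip (v n) w) h1 h2 h3 h4 => a b c d.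
move=> /ltr_normlP [h1 h1'] /ltr_normlP [h2 h2'] /ltr_normlP [h3 h3'] /ltr_normlP [h4 h4'].
by apply/ltr_normlP; split; lra.
Qed.

End NearMinimisers.

Section WeakCompactness.
Variables (R : realType) (X : lmodType R) (ip : X -> X -> R).
Hypothesis HX : is_hilbert ip.
Let Hip : is_inner_product ip := HX.1.

Lemma riesz_representation (f : X -> R) M :
  (forall x y, f (x + y) = f x + f y) -> (forall a x, f (a *: x) = a * f x) ->
  (forall z, f z <= M * hnorm ip z) ->
  exists l, forall z, ip l z = f z.
Proof.
move=> fD fZ fB.
have lb w : - M ^+ 2 <= ip w w - 2 * f w.
  rewrite -hnorm_sqr //; have := fB w; have := sqr_ge0 (hnorm ip w - M).
  by rewrite sqrrB; lra.
have [D [HD1 HD2]] := @ex_inf_approx _ _ (fun _ => True) (fun w => ip w w - 2 * f w) (- M ^+ 2)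
  (ex_intro _ 0 I) (fun w _ => lb w).
have hw j : {w | ip w w - 2 * f w < D + j.+1%:R^-1}.
  apply: constructive_indefinite_description.
  have j0 : 0 < j.+1%:R^-1 :> R by rewrite invr_gt0 ltr0Sn.
  by have [w [_ Hw]] := HD2 _ j0; exists w.
pose w j := proj1_sig (hw j).
have wP j : ip (w j) (w j) - 2 * f (w j) < D + j.+1%:R^-1 := proj2_sig (hw j).
have wC : cauchy_seq ip w.
  move=> e e0; have [K HK] := ex_invS_lt (divr_gt0 (exprn_gt0 2 e0) (ltr0Sn _ 3)).
  exists K => m n Km Kn; rewrite -[hnorm _ _]ger0_norm ?hnorm_ge0 //.
  apply: ltr_norm_sqr => //; rewrite hnorm_sqr //.
  apply: lt_le_trans (near_min_close Hip fD fZ (fun w => HD1 w I) (wP m) (wP n)) _.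
  have := HK _ Km; have := HK _ Kn; move: (m.+1%:R^-1) (n.+1%:R^-1) => a b; lra.
have [l Hl] := HX.2 w wC.
exists l => z.
have c1 : seq_cvg (fun j => ip (w j) z) (ip l z).
  apply: (@seq_cvg_squeeze _ _ (fun j => hnorm ip z * hnorm ip (w j - l))).
    by move=> j; rewrite -ipBl // mulrC; apply: norm_ip_le.
  by have := seq_cvgMl (hnorm ip z) Hl; rewrite mulr0.
apply: seq_cvg_unique c1 _ => e e0.
have q0 := ip_ge0 Hip z.
have K1 : 0 < ip z z + 1 by rewrite ltr_wpDl.
have [K HK] := ex_invS_lt (divr_gt0 (exprn_gt0 2 e0) K1).
exists K => j Kj; apply: ltr_norm_sqr => //.
have near := near_min_orth (S := fun _ => True) Hip (fun _ _ _ _ _ => I) fD fZ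
  (fun w' _ => HD1 w' I) I (wP j) I.
apply: le_lt_trans (near z) _.
have hj := HK _ Kj; rewrite ltr_pdivlMr // in hj.
have := exprn_gt0 2 e0; move: (j.+1%:R^-1) hj => s hs; move: (ip z z) q0 K1 hs => q.
nra.
Qed.

Lemma weak_cvg_of_ip_cvg (v : nat -> X) M : (forall n, hnorm ip (v n) <= M) ->
  (forall z, exists c, seq_cvg (fun n => ip (v n) z) c) ->
  exists l, weak_cvg ip v l.
Proof.
move=> vM vc.
have hf z : {c | seq_cvg (fun n => ip (v n) z) c}.
  exact: constructive_indefinite_description.
pose f z := proj1_sig (hf z).
have fP z : seq_cvg (fun n => ip (v n) z) (f z) := proj2_sig (hf z).
have [l Hl] : exists l, forall z, ip l z = f z.
  apply: (@riesz_representation _ M).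
  - move=> x y; apply: seq_cvg_unique (fP _) _.
    by apply: seq_cvg_ext (seq_cvgD (fP x) (fP y)) => n; rewrite ipDr.
  - move=> a x; apply: seq_cvg_unique (fP _) _.
    by apply: seq_cvg_ext (seq_cvgMl a (fP x)) => n; rewrite ipZr.
  - move=> z; apply: seq_cvg_le (fP z) => n; apply: le_trans (ip_le Hip _ _) _.
    by apply: ler_wpM2r; rewrite ?hnorm_ge0.
by exists l => z; rewrite Hl; apply: fP.
Qed.

Lemma bounded_weak_subseq (u : nat -> X) M : (forall n, hnorm ip (u n) <= M) ->
  exists2 s, increasing s & exists l, weak_cvg ip (u \o s) l.
Proof.
move=> uM.
have [psi Hpsi Hc] := @diagonal_subseq R (fun j n => ip (u n) (u j)) (M * M)
  (fun j n => le_trans (norm_ip_le Hip _ _) (ler_pM (hnorm_ge0 _ _) (hnorm_ge0 _ _) (uM n) (uM j))).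
exists psi => //; apply: (@weak_cvg_of_ip_cvg _ M) => [n|]; first exact: uM.
by apply: (@ip_cvg_of_span _ _ _ Hip u (u \o psi) M) => // n; [apply: inspan_gen | apply: uM].
Qed.

Lemma weak_cvg_of_subseq_limits (u : nat -> X) M l :
  (forall n, hnorm ip (u n) <= M) ->
  (forall s xs, increasing s -> weak_cvg ip (u \o s) xs -> xs = l) ->
  weak_cvg ip u l.
Proof.
move=> uM Hlim z; apply: NNPP => /not_seq_cvg [e e0 he].
have [th [hth bad]] := @ex_increasing_subseq (fun _ n => ~ `|ip (u n) z - ip l z| < e)
  (fun _ N => he N).
have [th2 hth2 [xs hxs]] := bounded_weak_subseq (fun k => uM (th k)).
have exs : xs = l by apply: (Hlim (th \o th2)) => //; exact: increasing_comp.
have [N HN] := hxs z e e0; rewrite exs in HN.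
exact: bad (th2 N) (HN N (leqnn N)).
Qed.

End WeakCompactness.

Lemma weak_cvg_ball (R : realType) (X : lmodType R) (ip : X -> X -> R) (u : nat -> X) l c K :
  is_inner_product ip -> weak_cvg ip u l -> (forall n, hnorm ip (u n - c) <= K) ->
  hnorm ip (l - c) <= K.
Proof.
move=> H hw hK; set z := l - c.
have K0 : 0 <= K by apply: le_trans (hK 0%N); apply: hnorm_ge0.
have h1 : seq_cvg (fun n => ip (u n - c) z) (ip z z).
  have := seq_cvgB (hw z) (seq_cvg_cst (ip c z)).
  by rewrite -ipBl //; apply: seq_cvg_ext => n; rewrite ipBl.
have h2 : ip z z <= K * hnorm ip z.
  apply: seq_cvg_le h1 => n; apply: le_trans (ip_le H _ _) _.
  by apply: ler_wpM2r; [exact: hnorm_ge0 | exact: hK].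
rewrite -hnorm_sqr // expr2 in h2.
have := hnorm_ge0 ip z; move: h2; move: (hnorm ip z) => a h2 a0.
rewrite leNgt; apply/negP => h.
have : K * a < a * a by rewrite ltr_pM2r //; apply: le_lt_trans h.
lra.
Qed.

Lemma ler_of_forall_scaled (R : realType) (a b : R) :
  (forall t, 0 < t <= 1 -> (1 - t) * a <= b) -> a <= b.
Proof.
move=> H; apply/ler_addgt0Pr => e e0.
have [a0|a0] := lerP a 0; first by have := H 1; rewrite lexx ltr01 subrr mul0r; lra.
pose t := e / (a + e).
have ae : 0 < a + e by rewrite addr_gt0.
have te : t * a + t * e = e by rewrite /t -mulrDr divfK ?gt_eqF.
have t0 : 0 < t by rewrite divr_gt0.
have := H t; rewrite t0 ler_pdivrMr // mul1r lerDr (ltW a0) => /(_ isT).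
by have := mulr_gt0 t0 e0; lra.
Qed.

Lemma ler0_of_small (R : realType) (c q T0 : R) : 0 < T0 ->
  (forall t, 0 < t <= T0 -> c <= t * q) -> c <= 0.
Proof.
move=> T0p H; apply/ler_addgt0Pr => e e0; rewrite add0r.
have q1 : 0 < `|q| + 1 by rewrite ltr_wpDl.
pose t := Order.min T0 (e / (`|q| + 1)).
have t0 : 0 < t by rewrite lt_min T0p divr_gt0.
have te : t * (`|q| + 1) <= e by rewrite -ler_pdivlMr // ge_min lexx orbT.
have := H t; rewrite t0 ge_min lexx /= => /(_ isT) h.
have := ler_wpM2l (ltW t0) (ler_norm q); rewrite mulrDr mulr1 in te; lra.
Qed.

Lemma ip_eq0_of_local_min (R : realType) (X : lmodType R) (ip : X -> X -> R) (v w : X) T0 :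
  is_inner_product ip -> 0 < T0 ->
  (forall t, `|t| <= T0 -> ip v v <= ip (v + t *: w) (v + t *: w)) -> ip v w = 0.
Proof.
move=> Hip T0p H.
have expand t : ip (v + t *: w) (v + t *: w) = ip v v + 2 * t * ip v w + t ^+ 2 * ip w w.
  by rewrite ip_sqrD // !ipZr // ipZl //; ring.
have side t : 0 < t <= T0 -> 2 * ip v w <= t * ip w w /\ - (2 * ip v w) <= t * ip w w.
  case/andP=> t0 tT; have ht : `|t| <= T0 by rewrite ger0_norm // ltW.
  have := H t ht; have := H (- t); rewrite normrN => /(_ ht).
  rewrite !expand sqrrN => h1 h2.
  by split; rewrite -(ler_pM2l t0); nra.
have h1 : 2 * ip v w <= 0 by apply: (ler0_of_small (q := ip w w) T0p) => t /side [].
have h2 : - (2 * ip v w) <= 0 by apply: (ler0_of_small (q := ip w w) T0p) => t /side [].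
lra.
Qed.

Section ConvexFunctional.
Variables (R : realType) (X : lmodType R) (ip : X -> X -> R).
Variables (domR : X -> Prop) (Rf : X -> R) (sigma : R) (gradRs : X -> X).
Hypothesis Hip : is_inner_product ip.
Hypothesis Hsigma : 0 < sigma.
Hypothesis Hsc : strongly_convex ip domR Rf sigma.
Hypothesis Hgrad : is_grad_conj ip domR Rf gradRs.

Lemma bregman_ge_sqr xi x z : subdiff ip domR Rf xi x -> domR z ->
  sigma * ip (z - x) (z - x) <= bregman ip Rf xi z x.
Proof.
move=> [dx Hsub] dz; apply: ler_of_forall_scaled => t /andP[t0 t1].
have ht : 0 <= t <= 1 by rewrite (ltW t0) t1.
have [dp Hp] := Hsc dz dx ht.
have hs := Hsub _ dp.
have e : t *: z + (1 - t) *: x - x = t *: (z - x).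
  by rewrite scalerBl scale1r scalerBr addrCA [x + _]addrC addrK.
rewrite e ipZr // ipBr // in hs; rewrite hnorm_sqr // in Hp.
rewrite /bregman (ipBr Hip z x xi) -(ler_pM2l t0).
by move: Hp hs; move: (ip (z - x) (z - x)) => d; nra.
Qed.

Lemma grad_conj_subdiff xi : subdiff ip domR Rf xi (gradRs xi).
Proof. by have [d h] := Hgrad xi; split => // z dz; have := h z dz; rewrite ipBr //; lra. Qed.

(* Expand 0 <= |xi' - xi - 2 sigma (x' - x)|^2 and use strong convexity at x'. *)
Lemma bregman_grad_conj_le xi x xi' : subdiff ip domR Rf xi x ->
  bregman ip Rf xi' x (gradRs xi') <= ip (xi' - xi) (xi' - xi) / (4 * sigma).
Proof.
move=> hx; have [d _] := Hgrad xi'.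
have := bregman_ge_sqr hx d; rewrite /bregman; set x' := gradRs xi'.
have hsq := ip_ge0 Hip ((xi' - xi) - (2 * sigma) *: (x' - x)).
rewrite ip_sqrB // ipZr // ipZl // ipZr // in hsq.
rewrite ler_pdivlMr ?mulr_gt0 //.
rewrite !ipBr // !ipBl // in hsq *.
rewrite (ipC Hip xi xi') (ipC Hip x x') in hsq *.
move=> h; have s4 : 0 < 4 * sigma by rewrite mulr_gt0.
have := ler_wpM2l (ltW s4) h; lra.
Qed.

End ConvexFunctional.

Section HalfSquaredNorm.
Variables (R : realType) (X : lmodType R) (ip : X -> X -> R) (domR : X -> Prop) (Rf : X -> R).
Hypothesis Hip : is_inner_product ip.
Hypothesis Hdom : forall x, domR x.
Hypothesis Hhalf : forall x, Rf x = ip x x / 2.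

Lemma subdiff_half_sqr xi x : subdiff ip domR Rf xi x -> xi = x.
Proof.
case=> _ /(_ xi (Hdom xi)); rewrite !Hhalf ipBr // => h.
apply/eqP; rewrite -subr_eq0; apply/eqP/(ip_eq0 Hip)/eqP.
by rewrite eq_le ip_ge0 // andbT; rewrite ip_sqrB // (ipC Hip xi x) in h *; lra.
Qed.

Lemma grad_conj_half_sqr gradRs : is_grad_conj ip domR Rf gradRs -> forall xi, gradRs xi = xi.
Proof.
move=> Hg xi; apply/esym/subdiff_half_sqr.
by have [_ h] := Hg xi; split => // z dz; have := h z dz; rewrite ipBr //; lra.
Qed.

End HalfSquaredNorm.

Section LinearizedOperator.
Variables (R : realType) (X Y : lmodType R) (ipX : X -> X -> R) (ipY : Y -> Y -> R).
Hypotheses (HX : is_inner_product ipX) (HY : is_inner_product ipY).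
Variables (F : X -> Y) (A : X -> Y) (Astar : Y -> X) (eta : R).
Hypothesis Alin : forall a u v, A (a *: u + v) = a *: A u + A v.

Lemma lin0 : A 0 = 0.
Proof.
have := Alin 1 0 0; rewrite scaler0 addr0 scale1r => e.
by have := congr1 (fun w => w - A 0) e; rewrite subrr addrK.
Qed.

Lemma linN u : A (- u) = - A u.
Proof. by have := Alin (-1) u 0; rewrite addr0 lin0 addr0 !scaleN1r. Qed.

Lemma linZ a u : A (a *: u) = a *: A u.
Proof. by rewrite -[a *: u]addr0 Alin lin0 addr0. Qed.

Lemma tcc_residual_le x xh y yd (delta : R) :
  hnorm ipY (F xh - F x - A (xh - x)) <= eta * hnorm ipY (F xh - F x) ->
  (forall u v, ipY (A u) v = ipX u (Astar v)) ->
  F xh = y -> hnorm ipY (yd - y) <= delta -> 0 <= eta ->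
  (1 - eta) * hnorm ipY (F x - yd) ^+ 2 - (1 + eta) * delta * hnorm ipY (F x - yd)
   <= ipX (Astar (F x - yd)) (x - xh).
Proof.
move=> htc hadj hy hd eta0; set r := F x - yd.
rewrite ipC // -hadj.
have hFy : F x - y = r + (yd - y) by rewrite /r addrA subrK.
have hL : A (x - xh) = (F xh - F x - A (xh - x)) + (r + (yd - y)).
  rewrite -hFy -opprB linN hy (addrC (y - F x - _)) addrA.
  by rewrite (_ : F x - y + (y - F x) = 0) ?add0r // addrA subrK subrr.
rewrite hL (ipDl HY (F xh - F x - _)) (ipDl HY r) -(hnorm_sqr HY r).
have c1 : - (delta * hnorm ipY r) <= ipY (yd - y) r.
  have := norm_ip_le HY (yd - y) r; rewrite ler_norml => /andP[h _].
  by apply: le_trans h; rewrite lerN2; apply: ler_wpM2r => //; exact: hnorm_ge0.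
have nFy : hnorm ipY (F xh - F x) <= hnorm ipY r + delta.
  rewrite hy hnorm_distC // hFy.
  by apply: le_trans (ler_hnormD HY _ _) _; rewrite lerD2l.
have c2 : - (eta * (hnorm ipY r + delta) * hnorm ipY r)
    <= ipY (F xh - F x - A (xh - x)) r.
  have := norm_ip_le HY (F xh - F x - A (xh - x)) r; rewrite ler_norml => /andP[h _].
  apply: le_trans h; rewrite lerN2; apply: ler_wpM2r; first exact: hnorm_ge0.
  by apply: le_trans htc _; apply: ler_wpM2l.
have := hnorm_ge0 ipY r; have := hnorm_ge0 ipY (yd - y).
move: c1 c2; set q := hnorm ipY r.
move: (ipY (F xh - F x - _) r) (ipY (yd - y) r) => a b; nra.
Qed.

Lemma adjoint_sqr_le (Lc : R) : 0 < Lc ->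
  (forall u, hnorm ipY (A u) <= Lc * hnorm ipX u) ->
  (forall u v, ipY (A u) v = ipX u (Astar v)) ->
  forall v, ipX (Astar v) (Astar v) <= Lc ^+ 2 * ipY v v.
Proof.
move=> Lc0 hb hadj v; set w := Astar v.
have h1 : ipX w w <= Lc * hnorm ipX w * hnorm ipY v.
  rewrite -hadj; apply: le_trans (ip_le HY _ _) _; apply: ler_wpM2r => //.
  exact: hnorm_ge0.
rewrite -!hnorm_sqr // in h1 *.
have a0 := hnorm_ge0 ipX w; have b0 := hnorm_ge0 ipY v.
move: h1 a0 b0; move: (hnorm ipX w) (hnorm ipY v) => a b h1 a0 b0.
suff : a <= Lc * b by nra.
have [->|ap] := eqVneq a 0; first by rewrite mulr_ge0 // ltW.
have a0' : 0 < a by rewrite lt_def ap a0.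
by rewrite -(ler_pM2r a0') -expr2 mulrAC.
Qed.

Lemma tcc_eq_of_ker x xb : 0 <= eta < 1 ->
  hnorm ipY (F x - F xb - A (x - xb)) <= eta * hnorm ipY (F x - F xb) ->
  A (x - xb) = 0 -> F x = F xb.
Proof.
move=> /andP[eta0 eta1] h hA; rewrite hA subr0 in h.
have hn : hnorm ipY (F x - F xb) = 0.
  by apply/eqP; rewrite eq_le hnorm_ge0 andbT; have := hnorm_ge0 ipY (F x - F xb); nra.
by apply/eqP; rewrite -subr_eq0; apply/eqP; apply: hnorm_eq0 HY _ hn.
Qed.

Lemma tcc_ker_of_eq x xb : F x = F xb ->
  hnorm ipY (F x - F xb - A (x - xb)) <= eta * hnorm ipY (F x - F xb) ->
  A (x - xb) = 0.
Proof.
move=> ->; rewrite subrr hnorm0 // mulr0 sub0r hnorm_opp // => h.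
by apply: hnorm_eq0 HY _ _; apply/eqP; rewrite eq_le h hnorm_ge0.
Qed.

End LinearizedOperator.

Definition alpha_of (R : realType) (X Y : lmodType R) (ipX : X -> X -> R) (ipY : Y -> Y -> R)
  (Lc mu0 mu1 : R) (rule : step_rule) (r : Y) (g : X) : R :=
  match rule with
  | ConstantStep => mu0 / Lc ^+ 2
  | AdaptiveStep => if g == 0 then mu1
                    else Order.min (mu0 * hnorm ipY r ^+ 2 / hnorm ipX g ^+ 2) mu1
  end.

Lemma alpha_of_bounds (R : realType) (X Y : lmodType R) (ipX : X -> X -> R)
  (ipY : Y -> Y -> R) (Lc mu0 mu1 : R) rule r g :
  is_inner_product ipX -> is_inner_product ipY -> 0 < Lc -> 0 < mu0 -> 0 < mu1 ->
  ipX g g <= Lc ^+ 2 * ipY r r ->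
  let a := alpha_of ipX ipY Lc mu0 mu1 rule r g in
  [/\ 0 < a, Order.min (mu0 / Lc ^+ 2) mu1 <= a & a * ipX g g <= mu0 * ipY r r].
Proof.
move=> HX HY Lc0 m0 m1 hg; rewrite /alpha_of.
have L2 : 0 < Lc ^+ 2 by rewrite exprn_gt0.
have r0 := ip_ge0 HY r; have g0 := ip_ge0 HX g.
case: rule.
  split; [by rewrite divr_gt0 | by rewrite ge_min lexx |].
  by rewrite mulrAC ler_pdivrMr //; have := ler_wpM2l (ltW m0) hg; nra.
case: eqP => [->|gn].
  by split; [| rewrite ge_min lexx orbT | rewrite ip0l // mulr0 mulr_ge0 // ltW].
rewrite !hnorm_sqr //.
have gp : 0 < ipX g g by rewrite lt_def ip_ge0 // andbT; apply/eqP => /(ip_eq0 HX).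
have rp : 0 < ipY r r.
  by rewrite lt_def r0 andbT; apply/eqP => h; move: hg; rewrite h mulr0 leNgt gp.
split; first by rewrite lt_min m1 andbT divr_gt0 // mulr_gt0.
  apply: le_min2 => //.
  by rewrite ler_pdivlMr // mulrAC ler_pdivrMr //; have := ler_wpM2l (ltW m0) hg; nra.
have hmin : Order.min (mu0 * ipY r r / ipX g g) mu1 <= mu0 * ipY r r / ipX g g.
  by rewrite ge_min lexx.
apply: le_trans (ler_wpM2r g0 hmin) _.
by rewrite mulrAC -mulrA mulrV ?mulr1 ?unitfE ?lt0r_neq0.
Qed.

Definition beta_of (R : realType) (X : lmodType R) (ipX : X -> X -> R) (beta : option R)
  (sigma alpha : R) (g m : X) (gam : R) : R :=
  if m == 0 then 0
  else cap_beta beta (Order.max 0 ((alpha * ipX g m - 2 * sigma * gam) / hnorm ipX m ^+ 2)).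

(* beta_n is chosen so that the momentum term costs no more than the plain
   gradient step in the quadratic bound of the descent estimate. *)
Lemma beta_of_bounds (R : realType) (X : lmodType R) (ipX : X -> X -> R) (beta : option R)
  (sigma alpha : R) (g m : X) (gam : R) :
  is_inner_product ipX -> 0 < sigma -> (forall b, beta = Some b -> 0 < b) ->
  let b := beta_of ipX beta sigma alpha g m gam in
  0 <= b /\
  ipX (- (alpha *: g) + b *: m) (- (alpha *: g) + b *: m) / (4 * sigma) + b * gam
    <= alpha ^+ 2 * ipX g g / (4 * sigma).
Proof.
move=> H s0 hb; rewrite /beta_of.
have s4 : 0 < 4 * sigma by rewrite mulr_gt0.
have expand b : ipX (- (alpha *: g) + b *: m) (- (alpha *: g) + b *: m) =
    alpha ^+ 2 * ipX g g - 2 * alpha * b * ipX g m + b ^+ 2 * ipX m m.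
  by rewrite ip_sqrD // !ipNl // !ipNr // !ipZl // !ipZr //; ring.
case: eqP => [->|mn].
  split => //; rewrite scaler0 addr0 mul0r addr0 ipNl // ipNr // opprK.
  by rewrite ipZl // ipZr // mulrA -expr2.
have mp : 0 < ipX m m by rewrite lt_def ip_ge0 // andbT; apply/eqP => /(ip_eq0 H).
rewrite hnorm_sqr //; set q := (alpha * ipX g m - 2 * sigma * gam) / ipX m m.
have [b0 bq] : 0 <= cap_beta beta (Order.max 0 q) /\ cap_beta beta (Order.max 0 q) <= Order.max 0 q.
  case: beta hb => [b hb|_] /=; last by rewrite le_max lexx.
  by rewrite le_min le_max lexx /= ltW ?hb // ge_min lexx.
move: (cap_beta _ _) b0 bq => b b0 bq; split => //.
rewrite expand ler_pdivlMr // mulrDl divfK ?gt_eqF //.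
suff : - 2 * alpha * b * ipX g m + b ^+ 2 * ipX m m + 4 * sigma * (b * gam) <= 0 by lra.
have [->|bn0] := eqVneq b 0; first by rewrite !(mulr0, mul0r, expr0n) /= !addr0.
have bp : 0 < b by rewrite lt_def bn0 b0.
have hq : b * ipX m m <= alpha * ipX g m - 2 * sigma * gam.
  rewrite -ler_pdivlMr //; move: bq; rewrite le_max => /orP[|//].
  by rewrite leNgt bp.
by have := ler_wpM2l b0 hq; nra.
Qed.

Definition gam_of (R : realType) (X : lmodType R) (ipX : X -> X -> R) (eta delta : R)
  (n : nat) (s : alg_state X) : R :=
  match n with
  | 0%N => 0
  | _.+1 => ipX (st_xi s - st_xip s) (st_x s - st_xp s)
            - (1 - eta) * st_ap s * st_rp s ^+ 2
            + (1 + eta) * st_ap s * delta * st_rp s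
            + st_bp s * st_gp s
  end.

Lemma gam_ofS (R : realType) (X : lmodType R) (ipX : X -> X -> R) (eta delta : R) n s :
  gam_of ipX eta delta n.+1 s = ipX (st_xi s - st_xip s) (st_x s - st_xp s)
    - (1 - eta) * st_ap s * st_rp s ^+ 2 + (1 + eta) * st_ap s * delta * st_rp s
    + st_bp s * st_gp s.
Proof. by []. Qed.

Lemma alg_stepE (R : realType) (X Y : lmodType R)
  (ipX : X -> X -> R) (ipY : Y -> Y -> R) (F : X -> Y) (Lstar : X -> Y -> X)
  (gradRs : X -> X) (sigma eta Lc mu0 mu1 : R) (rule : step_rule)
  (beta : option R) (delta : R) (yd : Y) (n : nat) (s : alg_state X) :
  let s' := alg_step ipX ipY F Lstar gradRs sigma eta Lc mu0 mu1 rule beta delta yd n s in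
  let r := F (st_x s) - yd in let g := Lstar (st_x s) r in
  let a := alpha_of ipX ipY Lc mu0 mu1 rule r g in
  let gm := gam_of ipX eta delta n s in
  let b := beta_of ipX beta sigma a g (st_xi s - st_xip s) gm in
  [/\ st_xi s' = st_xi s - a *: g + b *: (st_xi s - st_xip s), st_xip s' = st_xi s,
      st_x s' = gradRs (st_xi s'), st_xp s' = st_x s &
      [/\ st_ap s' = a, st_rp s' = hnorm ipY r, st_bp s' = b & st_gp s' = gm]].
Proof. by []. Qed.

(* Guaranteed decrease of the Bregman distance per step, divided by delta^2. *)
Definition descent_rate (R : realType) (sigma eta Lc tau mu0 mu1 : R) : R :=
  (1 - (1 + eta) / tau - eta - mu0 / (4 * sigma)) * Order.min (mu0 / Lc ^+ 2) mu1 * tau ^+ 2.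

Lemma descent_rate_gt0 (R : realType) (sigma eta Lc tau mu0 mu1 : R) :
  0 < Lc -> 0 < tau -> 0 < mu0 -> 0 < mu1 ->
  0 < 1 - (1 + eta) / tau - eta - mu0 / (4 * sigma) ->
  0 < descent_rate sigma eta Lc tau mu0 mu1.
Proof.
move=> Lc0 tau0 m0 m1 c0.
by rewrite /descent_rate !mulr_gt0 ?exprn_gt0 // lt_min m1 andbT divr_gt0 ?exprn_gt0.
Qed.

(* Before the discrepancy principle stops, delta < r / tau, which turns the
   noise term into a fraction of r^2. *)
Lemma descent_bound (R : realType) (sigma eta Lc tau mu0 mu1 a r delta G : R) :
  0 < sigma -> 0 <= eta -> 0 < Lc -> 0 < tau -> 0 < mu0 -> 0 < mu1 ->
  0 < delta -> tau * delta < r -> 0 < a -> Order.min (mu0 / Lc ^+ 2) mu1 <= a -> a * G <= mu0 * r ^+ 2 ->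
  0 < 1 - (1 + eta) / tau - eta - mu0 / (4 * sigma) ->
  a ^+ 2 * G / (4 * sigma) - a * ((1 - eta) * r ^+ 2 - (1 + eta) * delta * r)
    <= - (descent_rate sigma eta Lc tau mu0 mu1 * delta ^+ 2).
Proof.
move=> s0 eta0 Lc0 tau0 m0 m1 d0 hres a0 amin aG c0p.
have s4 : 0 < 4 * sigma by rewrite mulr_gt0.
have rp : 0 < r by apply: le_lt_trans hres; rewrite mulr_ge0 // ltW.
have q1 : a ^+ 2 * G / (4 * sigma) <= a * (mu0 / (4 * sigma)) * r ^+ 2.
  rewrite mulrA ler_pdivrMr // mulrAC [a * _ / _ * _]mulrAC divfK ?gt_eqF //.
  by have := ler_wpM2l (ltW a0) aG; nra.
have q2 : (1 + eta) * delta * r <= (1 + eta) / tau * r ^+ 2.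
  have h : delta <= r / tau by rewrite ler_pdivlMr // mulrC ltW.
  rewrite (_ : (1 + eta) / tau * r ^+ 2 = (1 + eta) * (r / tau) * r); last first.
    by field; rewrite gt_eqF.
  apply: ler_wpM2r; first exact: ltW.
  by apply: ler_wpM2l => //; rewrite addr_ge0.
have q3 : Order.min (mu0 / Lc ^+ 2) mu1 * (tau ^+ 2 * delta ^+ 2) <= a * r ^+ 2.
  apply: ler_pM => //; first by rewrite le_min !ltW // divr_gt0 // exprn_gt0.
  - by rewrite mulr_ge0 ?sqr_ge0.
  - by rewrite -exprMn !expr2; apply: ler_pM; rewrite ?mulr_ge0 ?ltW.
have q4 := ler_wpM2l (ltW c0p) q3.
have q5 := ler_wpM2l (ltW a0) q2.
rewrite /descent_rate; move: q1 q3 q4 q5 c0p.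
move: (Order.min _ _) (mu0 / (4 * sigma)) ((1 + eta) / tau) => m k1 k2.
nra.
Qed.

Section AlgorithmOne.
Variables (R : realType) (X Y : lmodType R) (ipX : X -> X -> R) (ipY : Y -> Y -> R).
Hypotheses (HX : is_hilbert ipX) (HY : is_hilbert ipY).
Let HXi : is_inner_product ipX := HX.1.
Let HYi : is_inner_product ipY := HY.1.
Variables (domR : X -> Prop) (Rf : X -> R) (sigma : R) (gradRs : X -> X).
Hypotheses (Hsigma : 0 < sigma) (Hsc : strongly_convex ipX domR Rf sigma)
  (Hgrad : is_grad_conj ipX domR Rf gradRs).
Variables (domF : X -> Prop) (F : X -> Y) (y : Y) (rho : R) (x0 xi0 xb : X).
Local Notation ball x := (hnorm ipX (x - x0) <= 2 * rho).
Hypotheses (Hrho : 0 < rho) (Hxi0 : subdiff ipX domR Rf xi0 x0)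
  (Hball : forall x, ball x -> domF x).
Hypotheses (Fxb : F xb = y) (dRxb : domR xb)
  (Dxb : bregman ipX Rf xi0 xb x0 <= sigma * rho ^+ 2).
Hypothesis Hwc : weakly_closed ipX ipY domF F.
Variables (L : X -> X -> Y) (Lstar : X -> Y -> X) (eta Lc : R).
Hypotheses
  (HLlin : forall x, ball x -> forall (a : R) (u v : X), L x (a *: u + v) = a *: L x u + L x v)
  (Heta : 0 <= eta < 1)
  (Htcc : forall x xb, ball x -> ball xb ->
     hnorm ipY (F x - F xb - L xb (x - xb)) <= eta * hnorm ipY (F x - F xb))
  (HLc : 0 < Lc)
  (HLbd : forall x, ball x -> forall u, hnorm ipY (L x u) <= Lc * hnorm ipX u)
  (HLstar : forall x, ball x -> forall u v, ipY (L x u) v = ipX u (Lstar x v)).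
Variables (tau mu0 mu1 : R) (beta : option R) (rule : step_rule).
Hypotheses (Htau : 1 < tau) (Hbeta : forall b, beta = Some b -> 0 < b)
  (Hmu0 : 0 < mu0) (Hmu1 : 0 < mu1)
  (Hcond : 0 < 1 - (1 + eta) / tau - eta - mu0 / (4 * sigma)).

Local Notation state dl yd :=
  (alg_state_at ipX ipY F Lstar gradRs sigma eta Lc mu0 mu1 rule beta xi0 x0 dl yd).
Local Notation iterate dl yd :=
  (alg_x ipX ipY F Lstar gradRs sigma eta Lc mu0 mu1 rule beta xi0 x0 dl yd).
Local Notation running dl yd n :=
  (forall m, (m < n)%N -> tau * dl < hnorm ipY (F (st_x (state dl yd m)) - yd)).
Local Notation rate := (descent_rate sigma eta Lc tau mu0 mu1).
Local Notation D0 := (bregman ipX Rf xi0 xb x0).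

Let eta0 : 0 <= eta. Proof. by case/andP: Heta. Qed.
Let tau0 : 0 < tau. Proof. exact: lt_trans Htau. Qed.
Let rate_gt0 : 0 < rate. Proof. exact: descent_rate_gt0. Qed.
Let rate_steps_ge0 (dl : R) (n : nat) : 0 <= rate * dl ^+ 2 * n%:R.
Proof. by rewrite mulr_ge0 ?ler0n // mulr_ge0 ?sqr_ge0 ?ltW. Qed.

Lemma sol_near_x0 : hnorm ipX (xb - x0) <= rho.
Proof.
apply: hnorm_le HXi _ _ (ltW Hrho) _; rewrite -(ler_pM2l Hsigma).
exact: le_trans (bregman_ge_sqr HXi Hsc Hxi0 dRxb) Dxb.
Qed.

Lemma sol_ball : ball xb.
Proof. by have := sol_near_x0; have := Hrho; lra. Qed.

Lemma ball_of_bregman_le xi x : subdiff ipX domR Rf xi x ->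
  bregman ipX Rf xi xb x <= D0 -> ball x.
Proof.
move=> hs hD.
have : hnorm ipX (xb - x) <= rho.
  apply: hnorm_le HXi _ _ (ltW Hrho) _; rewrite -(ler_pM2l Hsigma).
  exact: le_trans (bregman_ge_sqr HXi Hsc hs dRxb) (le_trans hD Dxb).
rewrite hnorm_distC // => h.
by apply: le_trans (hnorm_distD HXi x xb x0) _; have := sol_near_x0; have := Hrho; lra.
Qed.

Section OneStep.
Variables (dl : R) (yd : Y) (n : nat) (s : alg_state X).
Hypotheses (Hdl : 0 < dl) (Hyd : hnorm ipY (yd - y) <= dl).
Hypotheses (Hsub : subdiff ipX domR Rf (st_xi s) (st_x s)) (Hsb : ball (st_x s))
  (Hgam : ipX (st_xi s - st_xip s) (st_x s - xb) <= gam_of ipX eta dl n s).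

Local Notation s' := (alg_step ipX ipY F Lstar gradRs sigma eta Lc mu0 mu1 rule beta dl yd n s).
Local Notation r := (F (st_x s) - yd).
Local Notation g := (Lstar (st_x s) r).
Local Notation a := (alpha_of ipX ipY Lc mu0 mu1 rule r g).
Local Notation gm := (gam_of ipX eta dl n s).
Local Notation b := (beta_of ipX beta sigma a g (st_xi s - st_xip s) gm).

Lemma step_subdiff : subdiff ipX domR Rf (st_xi s') (st_x s').
Proof. exact: grad_conj_subdiff. Qed.

Lemma step_alpha_bounds :
  [/\ 0 < a, Order.min (mu0 / Lc ^+ 2) mu1 <= a & a * ipX g g <= mu0 * ipY r r].
Proof.
apply: alpha_of_bounds => //.
exact: (adjoint_sqr_le HXi HYi HLc (HLbd Hsb) (HLstar Hsb)).
Qed.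

Lemma step_increment : st_xi s' - st_xi s = - (a *: g) + b *: (st_xi s - st_xip s).
Proof. by rewrite /= addrAC [st_xi s - _ - _]addrAC subrr add0r. Qed.

Lemma step_inner_le : ipX (st_xi s' - st_xi s) (st_x s - xb)
  <= - (a * ((1 - eta) * hnorm ipY r ^+ 2 - (1 + eta) * dl * hnorm ipY r)) + b * gm.
Proof.
have [a0 _ _] := step_alpha_bounds.
have [b0 _] := beta_of_bounds a g (st_xi s - st_xip s) gm HXi Hsigma Hbeta.
have hT := tcc_residual_le HXi HYi (HLlin Hsb) (Htcc sol_ball Hsb) (HLstar Hsb) Fxb Hyd eta0.
rewrite step_increment ipDl // ipNl // !ipZl //.
have hb := ler_wpM2l b0 Hgam; have ha := ler_wpM2l (ltW a0) hT.
by apply: lerD; [rewrite lerN2; exact ha | exact hb].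
Qed.

Lemma step_gam : ipX (st_xi s' - st_xip s') (st_x s' - xb) <= gam_of ipX eta dl n.+1 s'.
Proof.
rewrite (_ : st_x s' - xb = (st_x s' - st_x s) + (st_x s - xb)); last by rewrite addrA subrK.
rewrite gam_ofS; have [_ -> _ -> [-> -> -> ->]] :=
  alg_stepE ipX ipY F Lstar gradRs sigma eta Lc mu0 mu1 rule beta dl yd n s.
by rewrite ipDr //; have := step_inner_le; lra.
Qed.

(* D(x') = D(x) + D^{xi'}(x, x') + <xi' - xi, x - xb>: the middle term is paid
   for by strong convexity, the last one by the tangential cone condition. *)
Lemma step_descent : tau * dl < hnorm ipY r ->
  bregman ipX Rf (st_xi s') xb (st_x s') + rate * dl ^+ 2
    <= bregman ipX Rf (st_xi s) xb (st_x s).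
Proof.
move=> hres.
have [a0 amin aG] := step_alpha_bounds.
have [_ bB] := beta_of_bounds a g (st_xi s - st_xip s) gm HXi Hsigma Hbeta.
have cb := bregman_grad_conj_le HXi Hsigma Hsc Hgrad (st_xi s') Hsub.
rewrite step_increment in cb.
have hid : bregman ipX Rf (st_xi s') xb (st_x s') = bregman ipX Rf (st_xi s) xb (st_x s)
    + bregman ipX Rf (st_xi s') (st_x s) (st_x s') + ipX (st_xi s' - st_xi s) (st_x s - xb).
  by rewrite /bregman !ipBl // !ipBr //; lra.
rewrite -(hnorm_sqr HYi) in aG.
have := descent_bound Hsigma eta0 HLc tau0 Hmu0 Hmu1 Hdl hres a0 amin aG Hcond.
by rewrite hid; have := step_inner_le; move: cb bB => /= cb bB; lra.
Qed.

End OneStep.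

Lemma bregman_sol_ge0 xi x : subdiff ipX domR Rf xi x -> 0 <= bregman ipX Rf xi xb x.
Proof.
move=> hs; apply: le_trans (bregman_ge_sqr HXi Hsc hs dRxb).
by rewrite mulr_ge0 ?ip_ge0 // ltW.
Qed.

Lemma iterate_invariant dl yd n : 0 < dl -> hnorm ipY (yd - y) <= dl -> running dl yd n ->
  [/\ subdiff ipX domR Rf (st_xi (state dl yd n)) (st_x (state dl yd n)),
      ipX (st_xi (state dl yd n) - st_xip (state dl yd n)) (st_x (state dl yd n) - xb)
        <= gam_of ipX eta dl n (state dl yd n) &
      bregman ipX Rf (st_xi (state dl yd n)) xb (st_x (state dl yd n)) + rate * dl ^+ 2 * n%:R
        <= D0].
Proof.
move=> d0 hyd; elim: n => [|n IH] hrun.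
  by split => //=; rewrite ?subrr ?ip0l // mulr0 addr0.
have [h1 h2 h3] := IH (fun m hm => hrun m (ltnW hm)).
have hb : ball (st_x (state dl yd n)).
  by apply: ball_of_bregman_le h1 _; apply: le_trans h3; rewrite lerDl.
split; [exact: step_subdiff | exact: step_gam |].
have := step_descent d0 hyd h1 hb h2 (hrun n (ltnSn n)).
have -> : state dl yd n.+1 =
  alg_step ipX ipY F Lstar gradRs sigma eta Lc mu0 mu1 rule beta dl yd n (state dl yd n) by [].
by rewrite -[n.+1]addn1 natrD mulrDr mulr1; lra.
Qed.

Lemma iterate_ball dl yd n : 0 < dl -> hnorm ipY (yd - y) <= dl -> running dl yd n ->
  ball (st_x (state dl yd n)).
Proof.
move=> d0 hyd hrun; have [h1 _ h3] := iterate_invariant d0 hyd hrun.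
by apply: ball_of_bregman_le h1 _; apply: le_trans h3; rewrite lerDl.
Qed.

Lemma running_steps_le dl yd n : 0 < dl -> hnorm ipY (yd - y) <= dl -> running dl yd n ->
  rate * dl ^+ 2 * n%:R <= D0.
Proof.
move=> d0 hyd hrun; have [h1 _ h3] := iterate_invariant d0 hyd hrun.
by have := bregman_sol_ge0 h1; lra.
Qed.

Lemma stop_index_exists dl yd : 0 < dl -> hnorm ipY (yd - y) <= dl ->
  exists n, is_stop_index ipX ipY F Lstar gradRs sigma eta Lc mu0 mu1 rule beta xi0 x0
              tau dl yd n.
Proof.
move=> d0 hyd.
pose P n := hnorm ipY (F (st_x (state dl yd n)) - yd) <= tau * dl.
have [[n Pn]|nex] := classic (exists n, P n).
  case: (ex_minnP (ex_intro P n Pn)) => m Pm hmin; exists m; split => // k km.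
  by rewrite ltNge; apply/negP => /hmin; rewrite leqNgt km.
have c0 : 0 < rate * dl ^+ 2 by rewrite mulr_gt0 ?exprn_gt0.
pose N := (Num.trunc ((rate * dl ^+ 2)^-1 * D0)).+1.
have hrun : running dl yd N.
  by move=> m _; rewrite ltNge; apply/negP => Pm; apply: nex; exists m.
have := running_steps_le d0 hyd hrun.
by rewrite -ler_pdivlMl // leNgt /N truncnS_gt.
Qed.

Lemma stop_ball dl yd n : 0 < dl -> hnorm ipY (yd - y) <= dl ->
  is_stop_index ipX ipY F Lstar gradRs sigma eta Lc mu0 mu1 rule beta xi0 x0 tau dl yd n ->
  ball (iterate dl yd n).
Proof. by move=> d0 hyd [_ hrun]; apply: iterate_ball. Qed.

Lemma stop_residual_le dl yd n : hnorm ipY (yd - y) <= dl ->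
  is_stop_index ipX ipY F Lstar gradRs sigma eta Lc mu0 mu1 rule beta xi0 x0 tau dl yd n ->
  hnorm ipY (F (iterate dl yd n) - y) <= (tau + 1) * dl.
Proof.
move=> hyd [hres _]; apply: le_trans (hnorm_distD HYi _ yd _) _.
by move: hres hyd; rewrite /alg_x; lra.
Qed.

Section NoisyData.
Variables (delta : nat -> R) (ydelta : nat -> Y) (nk : nat -> nat).
Hypotheses (Hdpos : forall k, 0 < delta k) (Hd0 : seq_cvg delta 0)
  (Hnoise : forall k, hnorm ipY (ydelta k - y) <= delta k)
  (Hstop : forall k, is_stop_index ipX ipY F Lstar gradRs sigma eta Lc mu0 mu1 rule beta
                       xi0 x0 tau (delta k) (ydelta k) (nk k)).
Local Notation u k := (iterate (delta k) (ydelta k) (nk k)).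

Lemma stopped_bounded k : hnorm ipX (u k) <= hnorm ipX x0 + 2 * rho.
Proof.
have := ler_hnormD HXi (u k - x0) x0; rewrite subrK.
by have := stop_ball (Hdpos k) (Hnoise k) (Hstop k); lra.
Qed.

Lemma stopped_weak_limit s xs : increasing s -> weak_cvg ipX (fun l => u (s l)) xs ->
  [/\ domF xs, F xs = y & ball xs].
Proof.
move=> hs hw.
have hF : strong_cvg ipY (fun l => F (u (s l))) y.
  apply: (seq_cvg_squeeze (v := fun l => (tau + 1) * delta (s l))).
    by move=> l; rewrite subr0 ger0_norm ?hnorm_ge0 ?stop_residual_le.
  by have := seq_cvgMl (tau + 1) (seq_cvg_subseq (increasing_ge hs) Hd0); rewrite mulr0.
have hb l : ball (u (s l)) by apply: stop_ball.
have [dxs Fxs] := Hwc (fun l => Hball (hb l)) hw hF.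
by split => //; apply: weak_cvg_ball HXi hw hb.
Qed.

Lemma stopped_weak_cluster : exists (kl : nat -> nat) (xs : X),
  (forall l, (kl l < kl l.+1)%N) /\ domF xs /\ F xs = y /\ ball xs /\
  weak_cvg ipX (fun l => u (kl l)) xs.
Proof.
have [kl hkl [xs hxs]] := bounded_weak_subseq HX stopped_bounded.
have [dxs Fxs bxs] := stopped_weak_limit hkl hxs.
by exists kl, xs.
Qed.

Section MinimumNorm.
Hypotheses (Hdom : forall x, domR x) (Hhalf : forall x, Rf x = ipX x x / 2).
Variable xdag : X.
Hypotheses (Fxd : F xdag = y)
  (Hmin : forall z, domF z -> F z = y -> hnorm ipX (xdag - x0) <= hnorm ipX (z - x0))
  (Hker : forall x, ball x -> forall w, L xdag w = 0 -> L x w = 0).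
Local Notation orth_ker v := (forall w, L xdag w = 0 -> ipX v w = 0).

Lemma min_norm_near_x0 : hnorm ipX (xdag - x0) <= rho.
Proof. exact: le_trans (Hmin (Hball sol_ball) Fxb) sol_near_x0. Qed.

Lemma min_norm_ball : ball xdag.
Proof. by have := min_norm_near_x0; have := Hrho; lra. Qed.

(* Near x^dagger, moving along Ker L(x^dagger) keeps F = y by the tangential
   cone condition, so minimality of ||x^dagger - x0|| forces orthogonality. *)
Lemma min_norm_orth_ker : orth_ker (xdag - x0).
Proof.
move=> w hw; have w1 : 0 < hnorm ipX w + 1 by rewrite ltr_wpDl ?hnorm_ge0.
apply: (@ip_eq0_of_local_min _ _ _ _ _ (rho / (hnorm ipX w + 1)) HXi).
  by rewrite divr_gt0.
move=> t ht; set v := xdag + t *: w.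
have ev : v - x0 = (xdag - x0) + t *: w by rewrite /v addrAC.
have vb : ball v.
  rewrite ev; apply: le_trans (ler_hnormD HXi _ _) _; rewrite hnormZ //.
  have : `|t| * hnorm ipX w <= rho.
    have := ler_wpM2r (hnorm_ge0 ipX w) ht; rewrite mulrAC; move/le_trans; apply.
    by rewrite ler_pdivrMr // mulrDr mulr1 lerDl ltW.
  by have := min_norm_near_x0; lra.
have Fv : F v = y.
  rewrite -Fxd; apply: (tcc_eq_of_ker HYi Heta (Htcc vb min_norm_ball)).
  by rewrite /v addrAC subrr add0r (linZ (HLlin min_norm_ball)) hw scaler0.
have := Hmin (Hball vb) Fv; rewrite ev => h.
by rewrite -!(hnorm_sqr HXi) ler_pXn2r ?nnegrE ?hnorm_ge0.
Qed.

Lemma iterate_orth_ker dl yd n : 0 < dl -> hnorm ipY (yd - y) <= dl -> running dl yd n ->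
  [/\ orth_ker (st_xi (state dl yd n) - x0), orth_ker (st_xip (state dl yd n) - x0)
    & st_x (state dl yd n) = st_xi (state dl yd n)].
Proof.
move=> d0 hyd; elim: n => [|n IH] hrun.
  by rewrite (subdiff_half_sqr HXi Hdom Hhalf Hxi0); split => //= w _; rewrite subrr ip0l.
have [o1 o2 o3] := IH (fun m hm => hrun m (ltnW hm)).
have hb := iterate_ball d0 hyd (fun m hm => hrun m (ltnW hm)).
have [-> -> -> _ _] :=
  alg_stepE ipX ipY F Lstar gradRs sigma eta Lc mu0 mu1 rule beta dl yd n (state dl yd n).
split; [| exact: o1 | by rewrite (grad_conj_half_sqr HXi Hdom Hhalf Hgrad)].
move=> w hw.
have og : ipX (Lstar (st_x (state dl yd n)) (F (st_x (state dl yd n)) - yd)) w = 0.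
  by rewrite ipC // -HLstar // (Hker hb hw) ip0l.
have := o1 w hw; have := o2 w hw; rewrite !ipBl // => /subr0_eq h2 /subr0_eq h1.
by rewrite !ipDl // !ipNl // !ipZl // !ipBl // og h1 h2 subrr !mulr0 subr0 addr0 subrr.
Qed.

Lemma stopped_orth_ker k : orth_ker (u k - x0).
Proof.
have [_ hrun] := Hstop k.
by have [o1 _ o3] := iterate_orth_ker (Hdpos k) (Hnoise k) hrun; rewrite /alg_x o3.
Qed.

(* Weak limits inherit orthogonality to Ker L(x^dagger), while their difference
   with x^dagger lies in that kernel. *)
Lemma stopped_limit_min_norm s xs : increasing s -> weak_cvg ipX (fun l => u (s l)) xs -> xs = xdag.
Proof.
move=> hs hw; have [_ Fxs bxs] := stopped_weak_limit hs hw.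
have oxs : orth_ker (xs - x0).
  move=> w hw0; apply: (@seq_cvg_unique _ (fun _ => 0)); last exact: seq_cvg_cst.
  rewrite ipBl //; apply: seq_cvg_ext (seq_cvgB (hw w) (seq_cvg_cst (ipX x0 w))) => l.
  by rewrite -ipBl // stopped_orth_ker.
have kxs : L xdag (xs - xdag) = 0.
  by apply: (tcc_ker_of_eq HYi) (Htcc bxs min_norm_ball); rewrite Fxs Fxd.
apply/eqP; rewrite -subr_eq0; apply/eqP/(ip_eq0 HXi).
rewrite [X in ipX X _](_ : xs - xdag = (xs - x0) - (xdag - x0)); last first.
  by rewrite opprB addrA subrK.
by rewrite ipBl // oxs // min_norm_orth_ker // subrr.
Qed.

Lemma stopped_weak_cvg_min_norm : weak_cvg ipX (fun k => u k) xdag.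
Proof.
apply: (weak_cvg_of_subseq_limits HX stopped_bounded).
exact: stopped_limit_min_norm.
Qed.

End MinimumNorm.

Lemma stopped_iterates_weak_limits :
  (exists (kl : nat -> nat) (xs : X),
     (forall l, (kl l < kl l.+1)%N) /\ domF xs /\ F xs = y /\ ball xs /\
     weak_cvg ipX (fun l => u (kl l)) xs) /\
  ((forall x, domR x) -> (forall x, Rf x = ipX x x / 2) ->
   forall xdag : X, domF xdag -> F xdag = y ->
     (forall z, domF z -> F z = y -> hnorm ipX (xdag - x0) <= hnorm ipX (z - x0)) ->
     (forall x, ball x -> forall w, L xdag w = 0 -> L x w = 0) ->
     weak_cvg ipX (fun k => u k) xdag).
Proof.
split; first exact: stopped_weak_cluster.
by move=> Hdom Hhalf xdag _ Fxd Hmin Hker; apply: stopped_weak_cvg_min_norm.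
Qed.

End NoisyData.

End AlgorithmOne.

Unset Implicit Arguments.

Theorem mainTheorem4
  (R : realType) (X Y : lmodType R) (ipX : X -> X -> R) (ipY : Y -> Y -> R)
  (HX : is_hilbert ipX) (HY : is_hilbert ipY)
  (domR : X -> Prop) (Rf : X -> R) (sigma : R) (Hsigma : 0 < sigma)
  (Hproper : proper_fun domR) (Hlsc : lsc_fun ipX domR Rf)
  (Hsc : strongly_convex ipX domR Rf sigma)
  (gradRs : X -> X) (HgradRs : is_grad_conj ipX domR Rf gradRs)
  (* assumption (b) *)
  (domF : X -> Prop) (F : X -> Y) (y : Y) (rho : R) (x0 xi0 : X)
  (Hrho : 0 < rho) (Hxi0 : subdiff ipX domR Rf xi0 x0)
  (Hball : forall x, hnorm ipX (x - x0) <= 2 * rho -> domF x)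
  (Hsol : exists xb, domF xb /\ F xb = y /\ domR xb /\
            bregman ipX Rf xi0 xb x0 <= sigma * rho ^+ 2)
  (* assumption (c) *)
  (Hwc : weakly_closed ipX ipY domF F)
  (* assumption (d) *)
  (L : X -> X -> Y) (Lstar : X -> Y -> X) (eta Lc : R)
  (HLlin : forall x, hnorm ipX (x - x0) <= 2 * rho ->
             forall (a : R) (u v : X), L x (a *: u + v) = a *: L x u + L x v)
  (HLcont : forall x, hnorm ipX (x - x0) <= 2 * rho ->
             forall eps : R, 0 < eps -> exists d : R, 0 < d /\
             forall x', hnorm ipX (x' - x0) <= 2 * rho -> hnorm ipX (x' - x) < d ->
             forall u, hnorm ipY (L x' u - L x u) <= eps * hnorm ipX u)
  (Heta : 0 <= eta < 1)
  (Htcc : forall x xb, hnorm ipX (x - x0) <= 2 * rho -> hnorm ipX (xb - x0) <= 2 * rho ->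
             hnorm ipY (F x - F xb - L xb (x - xb)) <= eta * hnorm ipY (F x - F xb))
  (HLc : 0 < Lc)
  (HLbd : forall x, hnorm ipX (x - x0) <= 2 * rho ->
             forall u, hnorm ipY (L x u) <= Lc * hnorm ipX u)
  (HLstar : forall x, hnorm ipX (x - x0) <= 2 * rho ->
             forall u v, ipY (L x u) v = ipX u (Lstar x v))
  (tau mu0 mu1 : R) (beta : option R) (rule : step_rule)
  (Htau : 1 < tau) (Hbeta : forall b, beta = Some b -> 0 < b)
  (Hmu0 : 0 < mu0) (Hmu1 : 0 < mu1)
  (Hcond : 0 < 1 - (1 + eta) / tau - eta - mu0 / (4 * sigma))
  (delta : nat -> R) (ydelta : nat -> Y)
  (Hdpos : forall k, 0 < delta k) (Hd0 : seq_cvg delta 0)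
  (Hnoise : forall k, hnorm ipY (ydelta k - y) <= delta k) :
  let xk := fun (k n : nat) =>
    alg_x ipX ipY F Lstar gradRs sigma eta Lc mu0 mu1 rule beta xi0 x0 (delta k) (ydelta k) n in
  exists nk : nat -> nat,
    (forall k, is_stop_index ipX ipY F Lstar gradRs sigma eta Lc mu0 mu1 rule beta xi0 x0
                 tau (delta k) (ydelta k) (nk k)) /\
    (exists (kl : nat -> nat) (xs : X),
        (forall l, (kl l < kl l.+1)%N) /\
        domF xs /\ F xs = y /\ hnorm ipX (xs - x0) <= 2 * rho /\
        weak_cvg ipX (fun l => xk (kl l) (nk (kl l))) xs) /\
    ((forall x, domR x) -> (forall x, Rf x = ipX x x / 2) ->
     forall xdag : X, domF xdag -> F xdag = y ->
       (forall z, domF z -> F z = y -> hnorm ipX (xdag - x0) <= hnorm ipX (z - x0)) ->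
       (forall x, hnorm ipX (x - x0) <= 2 * rho -> forall u, L xdag u = 0 -> L x u = 0) ->
       weak_cvg ipX (fun k => xk k (nk k)) xdag).
Proof.
move=> xk; rewrite /xk.
have [xb [_ [Fxb [dRxb Dxb]]]] := Hsol.
have hk k : {n | is_stop_index ipX ipY F Lstar gradRs sigma eta Lc mu0 mu1 rule beta
                   xi0 x0 tau (delta k) (ydelta k) n}.
  apply: constructive_indefinite_description.
  exact: (stop_index_exists HX HY Hsigma Hsc HgradRs Hrho Hxi0 Fxb dRxb Dxb
    HLlin Heta Htcc HLc HLbd HLstar rule Htau Hbeta Hmu0 Hmu1 Hcond (Hdpos k) (Hnoise k)).
exists (fun k => proj1_sig (hk k)); split; first by move=> k; exact: proj2_sig (hk k).
exact: (stopped_iterates_weak_limits HX HY Hsigma Hsc HgradRs Hrho Hxi0 Hball Fxb dRxb Dxb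
  Hwc HLlin Heta Htcc HLc HLbd HLstar Htau Hbeta Hmu0 Hmu1 Hcond Hdpos Hd0 Hnoise
  (fun k => proj2_sig (hk k))).
Qed.
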